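(* Consider a distributed storage system $\mathcal{D}(n,k,d)$ with $d=n-1$ operating in the bandwidth-limited regime with repair-bandwidth budget $\Gamma$, in the presence of an omniscient adversary controlling $b$ nodes. If $2b<k$, the resiliency capacity is \[ C_r^{BL}(\Gamma)=\sum_{i=2b+1}^{k}(n-i)\beta,\qquad \beta=\frac{\Gamma}{n-1}, \] achieved with node storage capacity $\alpha=\Gamma$. If $2b\ge k$, then $C_r^{BL}(\Gamma)=0$.
   Context: A distributed storage system (DSS) $\mathcal{D}(n,k,d)$, $k\le d\le n-1$: a source stores a file on $n$ storage nodes, each storing at most $\alpha$ symbols of a finite field $\mathbb{F}_q$. Nodes fail one at a time; each failed node is replaced by a new node that connects to some $d$ of the remaining $n-1$ active nodes and downloads $\beta=\gamma/d$ symbols from each (symmetric repair; $\gamma$ is the repair bandwidth), then stores at most $\alpha$ symbols. A data collector connects to any $k$ simultaneously active nodes, downloads their stored contents, and must recover the file. An omniscient adversary knows the file, the storage/repair/decoding schemes and all stored data, and may control any $b$ nodes among all nodes ever in the system (possibly at different times): for a controlled node it may arbitrarily alter the stored data and the messages that node sends during repair and to data collectors. The resiliency capacity $C_r(\alpha,\gamma)$ is the maximum file size that can be stored so that every data collector, for any failure/repair sequence, recovers the file correctly whatever the adversary does. The bandwidth-limited resiliency capacity is $C_r^{BL}(\Gamma)=\sup_{\gamma\le\Gamma,\ \alpha\ge0}C_r(\alpha,\gamma)$. Symbol counts are taken so that $\beta=\Gamma/(n-1)$ is a positive integer and $q$ is large enough for the required MDS codes to exist. *)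

(* Model of a DSS D(n,k,d) with d = n-1 (the only case the
   theorem concerns), symmetric repair, functional repair allowed, arbitrary
   (possibly non-linear) deterministic schemes over a finite field F = F_q,
   and an omniscient adversary controlling at most b nodes ever in the system. *)
From HB Require Import structures.
From mathcomp Require Import all_boot all_order all_algebra.
Set Implicit Arguments. Unset Strict Implicit. Unset Printing Implicit Defensive.
Import GRing.Theory.
Local Open Scope ring_scope.

Definition ztup (F : finFieldType) (m : nat) : m.-tuple F := [tuple (0 : F) | _ < m].

(* A storage / repair / decoding scheme with node capacity al symbols,
   per-helper repair download be symbols, file size B symbols.
   Histories are failure sequences (list of failed slots).
   - enc i file       : initial content of node in slot i
   - msg h j c        : message sent by the helper in slot j with content c,
                        during the repair whose history (including the
                        currently failed slot as last element) is h
   - rep h m          : content stored by the new node, from the messages m j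
                        received from every other slot j (entry of the failed
                        slot is the zero placeholder)
   - dec h S x        : data collector's decoder, at history h, connecting to
                        slot set S, with x j the data downloaded from slot j
                        (zero placeholder for j outside S). *)
Record scheme (F : finFieldType) (n al be B : nat) := Scheme {
  enc : 'I_n -> B.-tuple F -> al.-tuple F;
  msg : seq 'I_n -> 'I_n -> al.-tuple F -> be.-tuple F;
  rep : seq 'I_n -> ('I_n -> be.-tuple F) -> al.-tuple F;
  dec : seq 'I_n -> {set 'I_n} -> ('I_n -> al.-tuple F) -> B.-tuple F }.

(* Nodes ever in the system are identified by (slot, creation time):
   initial nodes have creation time 0, the node created by the t-th repair
   (t >= 1) has creation time t.  A : list of adversary-controlled nodes.
   advmsg t j : message sent in the t-th repair by the (controlled) helper in slot j. *)
Fixpoint run (F : finFieldType) (n al be B : nat) (sch : scheme F n al be B)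
    (A : seq (nat * nat)) (advmsg : nat -> 'I_n -> be.-tuple F)
    (h : seq 'I_n) (st : 'I_n -> al.-tuple F) (gn : 'I_n -> nat) (t : nat)
    (rest : seq 'I_n) : ('I_n -> al.-tuple F) * ('I_n -> nat) :=
  match rest with
  | [::] => (st, gn)
  | i :: rest' =>
      let h' := rcons h i in
      let t' := t.+1 in
      let m := fun j : 'I_n =>
        if j == i then ztup F be
        else if (nat_of_ord j, gn j) \in A then advmsg t' j
        else msg sch h' j (st j) in
      let st' := fun j : 'I_n => if j == i then rep sch h' m else st j in
      let gn' := fun j : 'I_n => if j == i then t' else gn j in
      run sch A advmsg h' st' gn' t' rest'
  end.

Definition download (F : finFieldType) (n al be B : nat) (sch : scheme F n al be B)
    (file : B.-tuple F) (fs : seq 'I_n) (A : seq (nat * nat))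
    (advmsg : nat -> 'I_n -> be.-tuple F) (advdc : 'I_n -> al.-tuple F)
    (S : {set 'I_n}) : 'I_n -> al.-tuple F :=
  let r := run sch A advmsg [::] (fun j => enc sch j file) (fun _ => 0%N) 0%N fs in
  fun j => if j \in S then
             (if (nat_of_ord j, r.2 j) \in A then advdc j else r.1 j)
           else ztup F al.

(* A file of B symbols can be stored resiliently with node storage al and
   per-helper repair bandwidth be (so repair bandwidth gamma = (n-1)*be):
   some scheme lets every data collector (any failure sequence, any k slots)
   decode correctly whatever an adversary controlling <= b nodes does. *)
Definition resilient (F : finFieldType) (n k b al be B : nat) : Prop :=
  exists sch : scheme F n al be B,
    forall (file : B.-tuple F) (fs : seq 'I_n) (A : seq (nat * nat))
           (advmsg : nat -> 'I_n -> be.-tuple F) (advdc : 'I_n -> al.-tuple F)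
           (S : {set 'I_n}),
      (size A <= b)%N -> #|S| = k ->
      dec sch fs S (download sch file fs A advmsg advdc S) = file.

From mathcomp Require Import all_boot all_order all_algebra zify.
From Stdlib Require Import FunctionalExtensionality.
Set Implicit Arguments. Unset Strict Implicit. Unset Printing Implicit Defensive.
Import GRing.Theory.

(* Achievability: attach e+1 = beta evaluation points to every pair {x, y} of
   slots, evaluate the file polynomial (of size B) there, and let slot x store
   the values of the n-1 pairs containing it; a failed slot is rebuilt by
   transfer, each helper sending the values of the pair it shares with it.
   A collector decodes any file consistent with the data of S outside some b
   slots.  Two such files agree on every pair {u, v} with u in S and neither
   u nor v in the at most 2b slots excluded by either; since at least k - 2b
   such u remain, each paired with all n - 2b nonexcluded slots, these pairs
   carry at least sum_{i=2b+1}^k (n-i) beta points, so the files coincide.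

   Converse: let slots 0, ..., k-1 fail and be repaired in turn and let the
   collector read them.  If two files f, f' yield the same repair messages in
   repairs 2b+1, ..., k, an adversary controlling the first b newcomers while
   the file is f and one controlling the next b newcomers while it is f' can
   both show the collector the same data, so f = f'.  These messages, sent by
   n - i helpers in repair i, carry at most sum_{i=2b+1}^k (n-i) beta'
   symbols, which bounds the file size; for 2b >= k there are none. *)

Section Converse.

Variables (F : finFieldType) (n' al be B k : nat).
Variable sch : scheme F n'.+1 al be B.
Hypothesis k_le_n' : k <= n'.

Definition first_slots : seq 'I_n'.+1 := mkseq inord k.

Lemma size_first_slots : size first_slots = k.
Proof. exact: size_mkseq. Qed.

Lemma drop_first_slots t : t < k ->
  drop t first_slots = inord t :: drop t.+1 first_slots.
Proof. by move=> tk; rewrite (drop_nth (inord t)) ?size_first_slots ?nth_mkseq. Qed.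

Lemma take_first_slotsS t : t < k ->
  take t.+1 first_slots = rcons (take t first_slots) (inord t).
Proof. by move=> tk; rewrite (take_nth (inord t)) ?size_first_slots ?nth_mkseq. Qed.

Lemma inord_first_slot t : t < k -> (inord t : 'I_n'.+1) = t :> nat.
Proof. by move=> tk; rewrite inordK //; lia. Qed.

Definition collector : {set 'I_n'.+1} := [set x : 'I_n'.+1 | x < k].

Lemma card_collector : #|collector| = k.
Proof.
have k_le_n : k <= n'.+1 by lia.
have -> : collector = [set widen_ord k_le_n y | y in 'I_k].
  apply/setP => x; rewrite inE; apply/idP/imsetP => [xk | [y _ ->]]; last by rewrite /=.
  by exists (Ordinal xk) => //; apply: val_inj.
by rewrite card_imset ?card_ord // => y1 y2 /(congr1 val) /= /val_inj.
Qed.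

Section Hybrid.

(* In the hybrid execution the helpers that have not failed yet serve the
   t-th repair as if the file were [file t]. *)
Variable file : nat -> B.-tuple F.

Definition hybrid_msg t (repaired : seq (al.-tuple F)) (j : 'I_n'.+1) : be.-tuple F :=
  if j == inord t then ztup F be
  else if j < t then msg sch (take t.+1 first_slots) j (nth (ztup F al) repaired j)
  else msg sch (take t.+1 first_slots) j (enc sch j (file t)).

Fixpoint hybrid_repairs t : seq (al.-tuple F) :=
  if t is t'.+1 then
    rcons (hybrid_repairs t')
          (rep sch (take t first_slots) (hybrid_msg t' (hybrid_repairs t')))
  else [::].

Lemma size_hybrid_repairs t : size (hybrid_repairs t) = t.
Proof. by elim: t => //= t IH; rewrite size_rcons IH. Qed.

Lemma nth_hybrid_repairs t j : j < t ->
  nth (ztup F al) (hybrid_repairs t) j =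
  rep sch (take j.+1 first_slots) (hybrid_msg j (hybrid_repairs j)).
Proof.
elim: t => // t IH; rewrite ltnS leq_eqVlt => /orP[/eqP->|jt] /=;
  by rewrite nth_rcons size_hybrid_repairs ?ltnn ?eqxx // jt IH.
Qed.

Definition newcomer (j : nat) : al.-tuple F := nth (ztup F al) (hybrid_repairs k) j.

Definition newcomer_msg t (j : 'I_n'.+1) : be.-tuple F :=
  msg sch (take t first_slots) j (newcomer j).

Lemma nth_hybrid_repairs_newcomer t j : j < t -> t <= k ->
  nth (ztup F al) (hybrid_repairs t) j = newcomer j.
Proof.
by move=> jt tk; rewrite /newcomer !nth_hybrid_repairs //; apply: leq_trans tk.
Qed.

Variables (P : pred nat) (A : seq (nat * nat)) (g : B.-tuple F).
Hypothesis A_initial : forall x, (x, 0) \notin A.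
Hypothesis A_newcomer : forall x, x < k -> ((x, x.+1) \in A) = P x.
Hypothesis g_like_file : forall t (j : 'I_n'.+1), t < k -> ~~ P t -> t < j ->
  msg sch (take t.+1 first_slots) j (enc sch j g) =
  msg sch (take t.+1 first_slots) j (enc sch j (file t)).

Definition hybrid_state t (st : 'I_n'.+1 -> al.-tuple F) (gn : 'I_n'.+1 -> nat) :=
  forall x : 'I_n'.+1,
    (x < t -> gn x = x.+1 /\ (~~ P x -> st x = newcomer x)) /\
    (t <= x -> gn x = 0 /\ st x = enc sch x g).

(* The left-hand side is the message function that [run] builds in repair t+1. *)
Lemma attack_msg_hybrid t st gn : t < k -> ~~ P t -> hybrid_state t st gn ->
  (fun j : 'I_n'.+1 =>
     if j == inord t then ztup F be
     else if (nat_of_ord j, gn j) \in A then newcomer_msg t.+1 j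
     else msg sch (take t.+1 first_slots) j (st j))
  = hybrid_msg t (hybrid_repairs t).
Proof.
move=> tk Pt inv; apply: functional_extensionality => j; rewrite /hybrid_msg.
case: eqVneq => [//|jt]; have {}jt : j != t :> nat.
  by apply: contra jt => /eqP jt; apply/eqP/val_inj; rewrite /= inord_first_slot.
case: ltnP => [j_lt_t | t_le_j].
  have [-> st_j] := (inv j).1 j_lt_t.
  rewrite A_newcomer ?nth_hybrid_repairs_newcomer ?(ltnW tk) //; last exact: ltn_trans tk.
  by case: ifP => // /negbT /st_j ->.
have [-> ->] := (inv j).2 t_le_j.
by rewrite (negbTE (A_initial _)) g_like_file // ltn_neqAle eq_sym jt.
Qed.

Lemma run_hybrid_state d t st gn : t + d = k -> hybrid_state t st gn ->
  let r := run sch A newcomer_msg (take t first_slots) st gn t (drop t first_slots) in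
  hybrid_state k r.1 r.2.
Proof.
elim: d t st gn => [|d IH] t st gn.
  by rewrite addn0 => tk inv; rewrite drop_oversize ?size_first_slots ?tk // -tk.
move=> tdk inv; have tk : t < k by lia.
rewrite drop_first_slots //= -take_first_slotsS //.
apply: IH; first by rewrite addSnnS.
have tt := inord_first_slot tk.
move=> x; split => [| t_lt_x]; last first.
  have xt : x != inord t by apply: contraTneq t_lt_x => ->; rewrite tt ltnn.
  by rewrite (negbTE xt); apply: (inv x).2; apply: ltnW.
rewrite ltnS; case: (eqVneq x (inord t)) => [-> _ | xt x_le_t].
  split=> [|Pt]; first by rewrite tt.
  rewrite tt in Pt *.
  rewrite /newcomer nth_hybrid_repairs //; congr (rep sch _ _).
  exact: attack_msg_hybrid.
have {x_le_t}x_lt_t : x < t.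
  rewrite ltn_neqAle x_le_t andbT; apply: contra xt => /eqP xt.
  by apply/eqP/val_inj; rewrite /= tt.
exact: (inv x).1.
Qed.

Lemma download_attack :
  download sch g first_slots A newcomer_msg (fun x => newcomer x) collector =
  fun x => if x \in collector then newcomer x else ztup F al.
Proof.
have init : hybrid_state 0 (fun j => enc sch j g) (fun=> 0) by [].
have := @run_hybrid_state k 0 _ _ (add0n k) init; rewrite take0 drop0 /= => fin.
apply: functional_extensionality => x; rewrite /download.
case: ifP => // xS; have xk : x < k by move: xS; rewrite inE.
have [-> st_x] := (fin x).1 xk.
by rewrite A_newcomer //; case: ifP => // /negbT /st_x.
Qed.

End Hybrid.

Definition newcomer_attack a m : seq (nat * nat) := [seq (i, i.+1) | i <- iota a m].

Lemma mem_newcomer_attack a m x y :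
  ((x, y) \in newcomer_attack a m) = (y == x.+1) && (a <= x < a + m).
Proof.
apply/mapP/andP => [[i] | [/eqP -> xa]]; last by exists x; rewrite ?mem_iota.
by rewrite mem_iota => ia [-> ->].
Qed.

Variable b : nat.
Hypothesis sch_resilient :
  forall (file : B.-tuple F) (fs : seq 'I_n'.+1) (A : seq (nat * nat))
         (advmsg : nat -> 'I_n'.+1 -> be.-tuple F) (advdc : 'I_n'.+1 -> al.-tuple F)
         (S : {set 'I_n'.+1}),
    size A <= b -> #|S| = k -> dec sch fs S (download sch file fs A advmsg advdc S) = file.

(* Corrupting the first c1 newcomers when the file is f and the next c2 when
   it is f' shows the collector the same data, namely the hybrid contents. *)
Lemma file_determined_by_late_msgs c1 c2 (f f' : B.-tuple F) :
  c1 <= b -> c2 <= b -> c1 + c2 <= k ->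
  (forall t (j : 'I_n'.+1), c1 + c2 <= t < k -> t < j ->
     msg sch (take t.+1 first_slots) j (enc sch j f) =
     msg sch (take t.+1 first_slots) j (enc sch j f')) ->
  f = f'.
Proof.
move=> c1b c2b ck late.
pose file t := if t < c1 then f' else f.
have dec_hybrid a m h : m <= b ->
  (forall t (j : 'I_n'.+1), t < k -> ~~ (a <= t < a + m) -> t < j ->
     msg sch (take t.+1 first_slots) j (enc sch j h) =
     msg sch (take t.+1 first_slots) j (enc sch j (file t))) ->
  dec sch first_slots collector
      (fun x => if x \in collector then newcomer file x else ztup F al) = h.
  move=> mb h_like_file; rewrite -(@download_attack file [pred x | a <= x < a + m]
                                     (newcomer_attack a m) h) //.
  - by apply: sch_resilient card_collector; rewrite size_map size_iota.
  - by move=> x; rewrite mem_newcomer_attack.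
  - by move=> x _; rewrite mem_newcomer_attack eqxx.
rewrite -(dec_hybrid 0 c1 f) // => [|t j _]; last first.
  by rewrite /file add0n leq0n /= -leqNgt => c1t _; rewrite ltnNge c1t.
apply: (dec_hybrid c1 c2) => // t j tk; rewrite negb_and -!ltnNge /file.
case/orP=> [-> // | c_le_t tj]; rewrite ltnNge (leq_trans (leq_addr _ _) c_le_t).
by rewrite late // tk andbT.
Qed.

Definition late_pairs c := [set p : 'I_k * 'I_n'.+1 | c <= p.1 < p.2].

Lemma file_size_le_late_msgs c : c <= 2 * b -> c <= k -> B <= be * #|late_pairs c|.
Proof.
move=> c2b ck.
pose late_msgs (f : B.-tuple F) := [ffun p : {p | p \in late_pairs c} =>
  msg sch (take (val p).1.+1 first_slots) (val p).2 (enc sch (val p).2 f)].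
have /leq_card : injective late_msgs.
  move=> f f' /ffunP same.
  apply: (@file_determined_by_late_msgs (minn b c) (c - minn b c)); try lia.
  rewrite subnKC ?geq_minr // => t j /andP[ct tk] tj.
  have pD : (Ordinal tk, j) \in late_pairs c by rewrite inE /= ct tj.
  by have := same (Sub (Ordinal tk, j) pD); rewrite !ffunE.
rewrite card_ffun !card_tuple card_sig -expnM leq_exp2l //.
exact: card_finNzRing_gt1.
Qed.

End Converse.

Lemma sum_ord_ltn N i : \sum_(j < N) (i < j) = N - i.+1.
Proof.
elim: N => [|N IH]; first by rewrite big_ord0.
by rewrite big_ord_recr /= IH; lia.
Qed.

Lemma card_late_pairs n' k c : c <= k ->
  #|late_pairs n' k c| = \sum_(c.+1 <= i < k.+1) (n'.+1 - i).
Proof.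
move=> ck.
have -> : #|late_pairs n' k c| = \sum_(i < k) \sum_(j < n'.+1) (c <= i < j : nat).
  rewrite pair_bigA -sum1_card big_mkcond /=.
  by apply: eq_bigr => p _; rewrite inE; case: ifP.
rewrite (eq_bigr (fun i : 'I_k => (c <= i) * (n'.+1 - i.+1))) => [|i _]; last first.
  rewrite -sum_ord_ltn big_distrr /=; apply: eq_bigr => j _.
  by case: (c <= i); rewrite ?mul1n ?mul0n.
rewrite big_add1 /= -(big_mkord xpredT (fun i => (c <= i) * (n'.+1 - i.+1))).
rewrite (big_cat_nat (leq0n c) ck) /= big1_seq ?add0n => [|i].
  by apply: eq_big_nat => i /andP[ci _]; rewrite ci mul1n.
by rewrite mem_index_iota => /andP[_ /andP[_ ic]]; rewrite leqNgt ic.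
Qed.

Section PackedMatrix.

Variables (T : Type) (p q : nat).

Definition pack (f : 'I_p -> 'I_q -> T) : (p * q).-tuple T :=
  [tuple mxvec (\matrix_(y, l) f y l) 0%R t | t < p * q].

Definition unpack (c : (p * q).-tuple T) (y : 'I_p) (l : 'I_q) : T :=
  tnth c (mxvec_index y l).

Lemma unpack_pack f y l : unpack (pack f) y l = f y l.
Proof. by rewrite /unpack tnth_mktuple mxvecE mxE. Qed.

End PackedMatrix.

Definition pairs (T : finType) (U G : {set T}) : {set {set T}} :=
  [set [set u; v] | u in U, v in G :\ u].

Definition star (T : finType) (u : T) (G : {set T}) : {set {set T}} :=
  [set [set u; v] | v in G :\ u].

Lemma card_star (T : finType) (u : T) (G : {set T}) : #|star u G| = #|G :\ u|.
Proof.
apply: card_in_imset => v1 v2; rewrite !inE => /andP[v1u _] _ same.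
have : v1 \in [set u; v2] by rewrite -same !inE eqxx orbT.
by rewrite !inE (negbTE v1u) => /eqP.
Qed.

Lemma pairsD1_star (T : finType) (u : T) (U G : {set T}) : u \in U -> U \subset G ->
  [disjoint pairs (U :\ u) (G :\ u) & star u G] /\
  pairs (U :\ u) (G :\ u) :|: star u G \subset pairs U G.
Proof.
move=> uU UG; split.
  rewrite -setI_eq0; apply/eqP/setP => P; rewrite !inE.
  apply/negP => /andP[/imset2P[u' v' u'U v'G ->] /imsetP[v _ same]].
  have : u \in [set u'; v'] by rewrite same !inE eqxx.
  move: u'U v'G; rewrite !inE => /andP[u'u _] /andP[v'u' /andP[v'u _]].
  by case/orP => /eqP uE; rewrite uE eqxx in u'u v'u.
apply/subsetP => P; rewrite inE => /orP[/imset2P[u' v' u'U v'G ->] | /imsetP[v vG ->]].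
  apply/imset2P; exists u' v' => //; first by move: u'U; rewrite inE => /andP[].
  by move: v'G; rewrite !inE => /andP[-> /andP[_ ->]].
by apply/imset2P; exists u v.
Qed.

(* Every u in U pairs with the #|G| - 1 other elements of G, and the i-th
   element removed loses the i earlier ones. *)
Lemma card_pairs_ge (T : finType) (U G : {set T}) : U \subset G ->
  \sum_(i < #|U|) (#|G| - i.+1) <= #|pairs U G|.
Proof.
move cardU : #|U| => s; elim: s U G cardU => [|s IH] U G cardU UG.
  by rewrite big_ord0.
have [u uU] : {u | u \in U} by apply/sigW/set0Pn; rewrite -card_gt0 cardU.
have uG : u \in G by apply: (subsetP UG).
have [disj sub] := pairsD1_star uU UG.
have cardU' : #|U :\ u| = s by move: cardU; rewrite (cardsD1 u U) uU => -[].
have := subset_leq_card sub; rewrite cardsU (disjoint_setI0 disj) cards0 subn0.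
rewrite card_star; apply: leq_trans.
rewrite big_ord_recl addnC (cardsD1 u G) uG add1n subn1 /= leq_add2r.
apply: leq_trans (IH _ _ cardU' (setSD _ UG)).
by apply: leq_sum => i _; rewrite /bump /=; lia.
Qed.

Lemma sum_subn_le (N k c s g : nat) : c <= k -> k - c <= s -> N - c <= g ->
  \sum_(c.+1 <= i < k.+1) (N - i) <= \sum_(i < s) (g - i.+1).
Proof.
move=> ck ks Ng.
rewrite big_add1 -{1}(add0n c) big_addn /= -(big_mkord xpredT (fun i => g - i.+1)).
rewrite (big_cat_nat (leq0n (k - c)) ks) /=.
apply: leq_trans (leq_addr _ _); rewrite big_nat [X in _ <= X]big_nat.
by apply: leq_sum => i _; lia.
Qed.

Lemma sum_le_card_pairs (T : finType) c k (S V : {set T}) :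
  #|S| = k -> #|V| <= c -> c <= k ->
  \sum_(c.+1 <= i < k.+1) (#|T| - i) <= #|pairs (S :\: V) (~: V)|.
Proof.
move=> cardS cardV ck.
have SVV : S :\: V \subset ~: V by apply/subsetP => x; rewrite !inE => /andP[].
apply: leq_trans (card_pairs_ge SVV); apply: sum_subn_le => //.
  rewrite cardsD cardS leq_sub2l // (leq_trans _ cardV) //.
  exact/subset_leq_card/subsetIr.
by rewrite cardsCs setCK; apply: leq_sub2l.
Qed.

Section PolyTuple.

Local Open Scope ring_scope.

Lemma Poly_tuple_eq (F : idomainType) B (f f' : B.-tuple F) (rs : seq F) :
  uniq rs -> (B <= size rs)%N -> {in rs, forall z, (Poly f).[z] = (Poly f').[z]} ->
  f = f'.
Proof.
move=> rs_uniq Brs same.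
suff /eqP PolyE : Poly f - Poly f' == 0.
  apply: val_inj; apply: (@eq_from_nth _ 0); first by rewrite !size_tuple.
  move=> i _; have := congr1 (fun p : {poly F} => p`_i) (subr0_eq PolyE).
  by rewrite !coef_Poly.
apply: contraLR Brs => nz; rewrite -ltnNge.
have roots : all (root (Poly f - Poly f')) rs.
  by apply/allP => z /same; rewrite /root hornerD hornerN subr_eq0 => ->.
apply: leq_trans (max_poly_roots nz roots rs_uniq) _.
apply: leq_trans (size_polyD _ _) _; rewrite size_polyN geq_max.
by rewrite !(leq_trans (size_Poly _)) ?size_tuple.
Qed.

End PolyTuple.

Section PairScheme.

Variables (F : finFieldType) (m e B b : nat) (pt : {set 'I_m.+2} * 'I_e.+1 -> F).

Local Notation slot := 'I_m.+2.
Local Notation contents := ((m.+1 * e.+1).-tuple F).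

Definition other (j i : slot) : 'I_m.+1 := odflt ord0 (unlift j i).

Lemma lift_other (j i : slot) : i != j -> lift j (other j i) = i.
Proof. by rewrite /other; case: unliftP => [y -> | ->] //; rewrite eqxx. Qed.

Definition pair_symbol (f : B.-tuple F) (P : {set slot}) (l : 'I_e.+1) : F :=
  (Poly f).[pt (P, l)]%R.

Definition consistent (S T : {set slot}) (x : slot -> contents) (f : B.-tuple F) :=
  [forall u in S :\: T, forall y, forall l,
    (lift u y \notin T) ==> (unpack (x u) y l == pair_symbol f [set u; lift u y] l)].

(* Slot x stores, for each other slot y, the e+1 symbols of the pair {x, y}.
   Repair is by transfer: every helper sends its symbols of the pair it shares
   with the failed slot, the last one of the history. *)
Definition pair_scheme : scheme F m.+2 (m.+1 * e.+1) e.+1 B := Scheme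
  (fun x f => pack (fun y l => pair_symbol f [set x; lift x y] l))
  (fun h j c => [tuple unpack c (other j (last ord0 h)) l | l < e.+1])
  (fun h ms => pack (fun y l => tnth (ms (lift (last ord0 h) y)) l))
  (fun _ S x => odflt (ztup F B)
     [pick f | [exists T : {set slot}, (#|T| <= b) && consistent S T x f]]).

Definition corrupted (A : seq (nat * nat)) : {set slot} :=
  [set x : slot | val x \in map fst A].

Lemma card_corrupted A : #|corrupted A| <= size A.
Proof.
apply: (@leq_trans #|pmap insub (map fst A) : seq slot|).
  by apply: subset_leq_card; apply/subsetP => z; rewrite inE mem_pmap_sub.
by apply: leq_trans (card_size _) _; rewrite size_pmap (leq_trans (count_size _ _)) ?size_map.
Qed.

Lemma uncorrupted_node A (x : slot) t : x \notin corrupted A -> ((val x, t) \in A) = false.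
Proof. by apply: contraNF => xA; rewrite inE (map_f fst xA). Qed.

Definition honest_pairs_correct (f : B.-tuple F) (W : {set slot}) (st : slot -> contents) :=
  forall x y l, x \notin W -> lift x y \notin W ->
    unpack (st x) y l = pair_symbol f [set x; lift x y] l.

Lemma run_pair_scheme f A adv rest h st gn t :
  honest_pairs_correct f (corrupted A) st ->
  honest_pairs_correct f (corrupted A) (run pair_scheme A adv h st gn t rest).1.
Proof.
elim: rest h st gn t => [//|i rest IH] h st gn t correct /=.
apply: IH => x y l; case: (eqVneq x i) => [-> | xi] xW yW; last exact: correct.
have ij : lift i y != i by rewrite eq_sym neq_lift.
rewrite unpack_pack last_rcons (negbTE ij) (uncorrupted_node _ yW) tnth_mktuple.
have ji : i != lift i y by rewrite eq_sym.
by have := correct (lift i y) (other (lift i y) i) l; rewrite (lift_other ji) setUC; apply.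
Qed.

Lemma download_consistent f fs A advmsg advdc S :
  consistent S (corrupted A) (download pair_scheme f fs A advmsg advdc S) f.
Proof.
apply/forall_inP => u; rewrite inE => /andP[uW uS]; apply/forallP => y; apply/forallP => l.
apply/implyP => yW; rewrite /download uS uncorrupted_node //.
apply/eqP/(run_pair_scheme _ _ _ _ _ _ _ uW yW) => ? ? ? _ _.
exact: unpack_pack.
Qed.

Hypothesis pt_inj : injective pt.

(* Two consistent candidates agree on every pair {u, v} with u in S and u, v
   outside both corrupted sets, and these pairs carry at least B symbols. *)
Lemma consistent_unique k (S W T : {set slot}) x (f f' : B.-tuple F) :
  B <= \sum_(2 * b + 1 <= i < k.+1) (m.+2 - i) * e.+1 -> 2 * b < k ->
  #|S| = k -> #|W| <= b -> #|T| <= b ->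
  consistent S W x f -> consistent S T x f' -> f = f'.
Proof.
move=> Bk bk cardS cardW cardT cons cons'.
pose V := W :|: T.
have cardV : #|V| <= 2 * b by rewrite (leq_trans (leq_card_setU _ _)) //; lia.
pose E := pairs (S :\: V) (~: V).
apply: (@Poly_tuple_eq _ _ f f' [seq pt q | q <- enum (setX E [set: 'I_e.+1])]).
- by rewrite map_inj_uniq ?enum_uniq.
- rewrite size_map -cardE cardsX cardsT card_ord (leq_trans Bk) // -big_distrl /=.
  rewrite leq_mul2r; apply/orP; right.
  by have := sum_le_card_pairs cardS cardV (ltnW bk); rewrite card_ord addn1.
move=> _ /mapP[[P l] /[!mem_enum] /setXP[/imset2P[u v uSV vV ->] _] ->].
move: uSV vV; rewrite !inE !negb_or => /andP[/andP[uW uT] uS] /andP[vu /andP[vW vT]].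
have agree (g : B.-tuple F) (R : {set slot}) :
    consistent S R x g -> u \notin R -> v \notin R ->
    pair_symbol g [set u; v] l = unpack (x u) (other u v) l.
  move=> consg uR vR; have uSR : u \in S :\: R by rewrite inE uR uS.
  move: consg => /forall_inP/(_ u uSR)/forallP/(_ (other u v))/forallP/(_ l).
  by rewrite lift_other // vR => /eqP ->.
change (pair_symbol f [set u; v] l = pair_symbol f' [set u; v] l).
by rewrite (agree f W) // (agree f' T).
Qed.

Lemma pair_scheme_resilient k :
  B <= \sum_(2 * b + 1 <= i < k.+1) (m.+2 - i) * e.+1 -> 2 * b < k ->
  resilient F m.+2 k b (m.+1 * e.+1) e.+1 B.
Proof.
move=> Bk bk; exists pair_scheme => f fs A advmsg advdc S sizeA cardS /=.
have cons := download_consistent f fs A advmsg advdc S.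
have cardW : #|corrupted A| <= b by apply: leq_trans (card_corrupted A) sizeA.
case: pickP => [f' /existsP[T /andP[cardT cons']] | none] /=.
  exact: consistent_unique Bk bk cardS cardT cardW cons' cons.
suff : [exists T : {set slot},
          (#|T| <= b) && consistent S T (download pair_scheme f fs A advmsg advdc S) f].
  by rewrite none.
by apply/existsP; exists (corrupted A); rewrite cardW.
Qed.

End PairScheme.

Lemma nth_enum_rank_inj (T U : finType) (u0 : U) : #|T| <= #|U| ->
  injective (fun t : T => nth u0 (enum U) (enum_rank t)).
Proof.
move=> TU t1 t2 /= same; apply/enum_rank_inj/val_inj/eqP.
have rank_lt (t : T) : enum_rank t < size (enum U).
  by rewrite -cardE (leq_trans (ltn_ord _)) // -cardT.
by rewrite -(nth_uniq u0 (rank_lt t1) (rank_lt t2) (enum_uniq _)) same.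
Qed.

Theorem theorem4 (n k b beta : nat) :
  (0 < k)%N -> (k <= n.-1)%N -> (0 < beta)%N ->
  ((2 * b < k)%N ->
     exists Q : nat, forall F : finFieldType, (Q <= #|F|)%N ->
       resilient F n k b (n.-1 * beta) beta
                 (\sum_(2 * b + 1 <= i < k.+1) (n - i) * beta)%N /\
       (forall al beta' B : nat, (beta' <= beta)%N ->
          resilient F n k b al beta' B ->
          (B <= \sum_(2 * b + 1 <= i < k.+1) (n - i) * beta)%N)) /\
  ((k <= 2 * b)%N ->
     forall F : finFieldType, forall al beta' B : nat, (beta' <= beta)%N ->
       resilient F n k b al beta' B -> B = 0%N).
Proof.
case: n => [|[|m]] k_gt0 kn; try by move: (leq_trans k_gt0 kn).
case: beta => [//|e] _; split=> [bk | kb F al beta' B beta'e [sch sch_res]].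
  exists #|{: {set 'I_m.+2} * 'I_e.+1}| => F enough_points; split.
    exact (pair_scheme_resilient (@nth_enum_rank_inj _ _ 0%R enough_points) (leqnn _) bk).
  move=> al beta' B beta'e [sch sch_res].
  apply: leq_trans (file_size_le_late_msgs kn sch_res (leqnn _) (ltnW bk)) _.
  rewrite card_late_pairs ?(ltnW bk) // -big_distrl /= mulnC addn1.
  exact: leq_mul.
have := file_size_le_late_msgs kn sch_res kb (leqnn k).
by rewrite card_late_pairs // big_geq // muln0 leqn0 => /eqP.
Qed.
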